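(* Let $M\subset X$ be nonempty, $F:X\rightrightarrows Y$ with nonempty values, and $\bar x\in M\cap M'$ such that $F(\bar x)$ is $K$-sequentially compact and $\bar x$ is an ideal minimum for $F$ on $M$. Suppose there are $e\in K\setminus\{0\}$ and $\ell>0$ such that for all $u\in X\setminus M$ and $v\in M$, $$F(u)+\ell\|u-v\|e\subset F(v)+K.$$ Then $\bar x$ is an ideal minimum on $X$ for the set-valued map $G:X\rightrightarrows Y$, $G(x)=F(x)+\ell d_M(x)e$.
   Context: $X,Y$ are real normed spaces, $K\subset Y$ a pointed closed convex cone, $M'$ the set of accumulation points of $M$, $d_M(x)=\inf_{m\in M}\|x-m\|$. A nonempty $A\subset Y$ is $K$-sequentially compact if for every $(a_n)\subset A$ there is $(c_n)\subset K$ such that $(a_n-c_n)$ has a subsequence converging to an element of $A$. For nonempty $S\subset X$, $\bar x\in S$ is an ideal minimum for $F$ on $S$ if $F(\bar x)\not\subset F(x)+(Y\setminus -K)$ for all $x\in S\setminus\{\bar x\}$; ''on $X$'' means $S=X$. *)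

From HB Require Import structures.
From mathcomp Require Import all_boot all_order all_algebra.
From mathcomp Require Import all_classical all_reals all_analysis.
Set Implicit Arguments. Unset Strict Implicit. Unset Printing Implicit Defensive.
Import Order.TTheory GRing.Theory Num.Theory.
Import numFieldNormedType.Exports.
Local Open Scope classical_set_scope.
Local Open Scope ring_scope.

Section Defs.
Context {R : realType} {Y : normedModType R}.

Definition minkowski_sum (A B : set Y) : set Y := [set a + b | a in A & b in B].

Definition setopp (K : set Y) : set Y := [set y | K (- y)].

Definition pointed_closed_convex_cone (K : set Y) : Prop :=
  [/\ K 0,
      (forall k1 k2, K k1 -> K k2 -> K (k1 + k2)),
      (forall (t : R) k, 0 <= t -> K k -> K (t *: k)),
      (forall k, K k -> K (- k) -> k = 0)
    & closed K].

Definition K_seq_compact (K A : set Y) : Prop :=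
  A !=set0 /\
  forall a : nat -> Y, (forall n, A (a n)) ->
    exists c : nat -> Y, (forall n, K (c n)) /\
      exists (phi : nat -> nat) (y : Y),
        {homo phi : n m / (n < m)%N} /\ A y /\
        ((fun n => a (phi n) - c (phi n)) @ \oo --> y).

End Defs.

Section Defs2.
Context {R : realType} {X Y : normedModType R}.

Definition ideal_min (K : set Y) (F : X -> set Y) (S : set X) (xb : X) : Prop :=
  S xb /\ forall x, S x -> x != xb -> ~ (F xb `<=` minkowski_sum (F x) (~` setopp K)).

Definition dist_set (M : set X) (x : X) : R := inf [set `|x - m| | m in M].

End Defs2.

From HB Require Import structures.
From mathcomp Require Import all_boot all_order all_algebra.
From mathcomp Require Import all_classical all_reals all_analysis.
Import Order.TTheory GRing.Theory Num.Theory.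
Import numFieldNormedType.Exports.
Local Open Scope classical_set_scope.
Local Open Scope ring_scope.

(* Outside [M] the penalty [l d_M(x) e] is approached by [l |x - v| e] with
   [v] in [M \ {xb}] near-optimal for [d_M(x)]; the Lipschitz-type hypothesis
   transports [F x] into [F v + K], and the ideal minimality of [xb] on [M]
   yields points [y_v] of [F xb] lying below all of [F v].  If [F xb] were
   contained in [G x + (Y \ -K)], some [y = f + l d_M(x) e + w] with [-w] not
   in [K] would be a limit of points [y_v - c_v], [c_v] in [K]; the vectors
   [f + l |x - v| e - (y_v - c_v)] lie in [K] and converge to [-w], which
   contradicts the closedness of [K]. *)

Lemma homo_ltn_cvgny (phi : nat -> nat) :
  {homo phi : n m / (n < m)%N} -> phi @ \oo --> \oo.
Proof.
move=> phi_incr; have phi_ge n : (n <= phi n)%N.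
  by elim: n => // n IHn; exact: leq_ltn_trans IHn (phi_incr _ _ (ltnSn n)).
apply/cvgnyPge => A; near=> n; apply: leq_trans (phi_ge n).
by near: n; exact: nbhs_infty_ge.
Unshelve. all: end_near. Qed.

Section dist_set.
Context {R : realType} {X : normedModType R}.
Implicit Types (M : set X) (x : X).

Lemma dist_set_lbound M x : has_lbound [set `|x - m| | m in M].
Proof. by exists 0 => _ [m _ <-]. Qed.

Lemma dist_set_le M x m : M m -> dist_set M x <= `|x - m|.
Proof. by move=> Mm; apply: (ge_inf (dist_set_lbound M x)); exists m. Qed.

Lemma dist_set_eq0 M x : M x -> dist_set M x = 0.
Proof.
move=> Mx; apply/eqP; rewrite eq_le; apply/andP; split.
  by have := dist_set_le M x x Mx; rewrite subrr normr0.
by apply: lb_le_inf; [exists `|x - x|, x | move=> _ [m _ <-]].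
Qed.

Lemma dist_set_punctured_lt M x xb (eps : R) : M !=set0 -> limit_point M xb ->
  0 < eps -> exists v, [/\ M v, v != xb & `|x - v| < dist_set M x + eps].
Proof.
move=> [m0 Mm0] lim_xb eps_gt0; have eps2_gt0 : 0 < eps / 2 by rewrite divr_gt0.
have Dne : [set `|x - m| | m in M] !=set0 by exists `|x - m0|, m0.
have [_ [m Mm <-] m_lt] := inf_adherent eps2_gt0 (conj Dne (dist_set_lbound M x)).
have [m_xb|m_neq] := eqVneq m xb; last first.
  exists m; split => //; apply: (lt_le_trans m_lt); rewrite lerD2l.
  by rewrite ler_pdivrMr // ler_peMr ?ltW // ltr1n.
(* [xb] itself is optimal: replace it by a nearby point of [M \ {xb}]. *)
rewrite {}m_xb in m_lt.
have [v [v_neq Mv xb_v]] := lim_xb _ (nbhsx_ballx xb _ eps2_gt0).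
exists v; split => //; rewrite -ball_normE /= in xb_v.
apply: le_lt_trans (ler_distD xb x v) _.
by rewrite [eps]splitr addrA ltrD.
Qed.

Lemma dist_set_punctured_approx M x xb : M !=set0 -> limit_point M xb ->
  exists v : nat -> X, (forall n, M (v n) /\ v n != xb) /\
    (fun n => `|x - v n|) @ \oo --> dist_set M x.
Proof.
move=> M0 lim_xb.
have /choice[v vP] n := dist_set_punctured_lt M x xb _ M0 lim_xb (harmonic_gt0 n).
exists v; split=> [n|]; first by have [] := vP n.
apply: (@squeeze_cvgr _ _ _ _ (cst (dist_set M x))
  (fun n => dist_set M x + harmonic n)); last first.
- by rewrite -[X in _ --> X]addr0; apply: cvgD; [exact: cvg_cst|exact: cvg_harmonic].
- exact: cvg_cst.
apply: nearW => n; have [Mv _ v_lt] := vP n.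
by rewrite dist_set_le //= ltW.
Qed.

Lemma dist_set_shift_on {Y : normedModType R} M (F : X -> set Y) (e : Y) (l : R) x :
  M x -> [set y + (l * dist_set M x) *: e | y in F x] = F x.
Proof.
move=> Mx; rewrite dist_set_eq0 // mulr0 scale0r.
by apply/seteqP; split=> [_ [y Fy <-]|y Fy]; [rewrite addr0 | exists y; rewrite ?addr0].
Qed.

End dist_set.

Lemma ideal_min_witness {R : realType} {X Y : normedModType R}
    {K : set Y} {F : X -> set Y} {M : set X} {xb v : X} :
  ideal_min K F M xb -> M v -> v != xb ->
  exists2 y, F xb y & forall f, F v f -> K (f - y).
Proof.
move=> [_ xb_min] Mv v_neq; apply: contrapT => no_y; apply: (xb_min v Mv v_neq).
move=> y Fy; apply: contrapT => y_out; apply: no_y; exists y => // f Fvf.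
apply: contrapT => nK; apply: y_out; exists f => //; exists (y - f).
  by rewrite /setopp /= opprB.
by rewrite addrC subrK.
Qed.

Lemma minkowski_sum_sub_cone {R : realType} {Y : normedModType R}
    {K A : set Y} {z y : Y} :
  (forall k1 k2, K k1 -> K k2 -> K (k1 + k2)) ->
  minkowski_sum A K z -> (forall f, A f -> K (f - y)) -> K (z - y).
Proof.
move=> KD [f Af [k Kk <-]] K_fy.
by rewrite addrAC; apply: KD; [exact: K_fy|].
Qed.

Theorem mainTheorem16 (R : realType) (X Y : normedModType R)
  (K : set Y) (M : set X) (F : X -> set Y) (xb : X) (e : Y) (l : R) :
  pointed_closed_convex_cone K ->
  M !=set0 ->
  (forall x, F x !=set0) ->
  M xb -> limit_point M xb ->
  K_seq_compact K (F xb) ->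
  ideal_min K F M xb ->
  K e -> e != 0 -> 0 < l ->
  (forall u v, ~ M u -> M v ->
     [set y + (l * `|u - v|) *: e | y in F u] `<=` minkowski_sum (F v) K) ->
  ideal_min K (fun x => [set y + (l * dist_set M x) *: e | y in F x]) setT xb.
Proof.
move=> [_ KD _ _ K_closed] M0 _ Mxb lim_xb [_ Fxb_cpt] xb_min _ _ _ transport.
split=> // x _ x_neq; have [Mx|nMx] := pselect (M x).
  by rewrite !dist_set_shift_on //; case: xb_min => _; exact.
rewrite dist_set_shift_on // => Fxb_sub.
have [v [vP v_cvg]] := dist_set_punctured_approx M x xb M0 lim_xb.
have /choice[y_ y_P] n : exists y, F xb y /\ forall f, F (v n) f -> K (f - y).
  by have [Mv v_neq] := vP n; have [y] := ideal_min_witness xb_min Mv v_neq; exists y.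
have [c [Kc [phi [y [phi_incr [Fy y_cvg]]]]]] := Fxb_cpt y_ (fun n => (y_P n).1).
have [_ [f Ff <-] [w nKw yE]] := Fxb_sub y Fy.
apply: nKw; rewrite /setopp /=.
pose z n := f + (l * `|x - v (phi n)|) *: e - (y_ (phi n) - c (phi n)).
apply: (@closed_cvg _ _ \oo _ z K K_closed).
  apply: nearW => n; rewrite /z opprB addrCA addrC; apply: (KD _ _ _ (Kc _)).
  apply: (minkowski_sum_sub_cone KD _ (y_P _).2).
  by apply: (transport _ _ nMx (vP _).1); exists f.
have -> : - w = f + (l * dist_set M x) *: e - y.
  by rewrite -yE opprD addrA subrr add0r.
apply: cvgB y_cvg; apply: cvgD; first exact: cvg_cst.
apply: cvgZ (cvg_cst _); apply: cvgM (cvg_cst _) _.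
apply: (cvg_comp phi (fun n => `|x - v n|) (homo_ltn_cvgny _ phi_incr) v_cvg).
Qed.
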